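(* Let $C$ be a commutative ring, let $X,Y$ be disjoint sets with $|X|=|Y|=n$, and let $S_{2n}$ be the symmetric group on $X\cup Y$. For $Z\subseteq X$ put $P(Z)=\sum_{\sigma\in S_{2n},\ \sigma(Z)\subseteq Y}\operatorname{sgn}(\sigma)\,\sigma\in C[S_{2n}]$. Then $$\sum_{Z\subseteq X}(-1)^{|Z|}P(Z)=\sum_{\sigma\in S_{2n},\ \sigma(X)=X}\operatorname{sgn}(\sigma)\,\sigma.$$ *)

From HB Require Import structures.
From mathcomp Require Import all_boot all_order all_algebra all_fingroup.
Set Implicit Arguments. Unset Strict Implicit. Unset Printing Implicit Defensive.
Import GRing.Theory.
Local Open Scope ring_scope.

(* The group ring C[Sym(T)] as a (free) C-module: an element sum_s c_s s is
   represented by its coefficient function {ffun {perm T} -> C^o}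
   (C^o = C viewed as a module over itself).  Only the module structure
   (sums and scalar multiples) is needed for the statement. *)
Definition group_ring (C : comPzRingType) (T : finType) :=
  {ffun {perm T} -> C^o}.

Definition gr_basis (C : comPzRingType) (T : finType) (s : {perm T})
  : group_ring C T := [ffun t => (t == s)%:R].

Definition Pgr (C : comPzRingType) (T : finType) (Y Z : {set T})
  : group_ring C T :=
  \sum_(s : {perm T} | s @: Z \subset Y) (-1) ^+ odd_perm s *: gr_basis C s.

From HB Require Import structures.
From mathcomp Require Import all_boot all_order all_algebra all_fingroup.
Set Implicit Arguments. Unset Strict Implicit. Unset Printing Implicit Defensive.
Import GRing.Theory.
Local Open Scope ring_scope.

(* The coefficient of a permutation s on the left-hand side is the alternating
   sum of (-1)^|Z| over the subsets Z of X with s(Z) included in Y, that is over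
   the subsets of X :&: s^-1(Y).  Such a sum vanishes unless the set is empty,
   and as Y is the complement of X this happens exactly when s(X) = X. *)

Lemma sum_subset_sign (R : pzRingType) (T : finType) (A : {set T}) :
  \sum_(Z : {set T} | Z \subset A) (-1) ^+ #|Z| = (A == set0)%:R :> R.
Proof.
have [->|[a aA]] := set_0Vmem A.
  by rewrite eqxx (big_pred1 set0) ?cards0 // => Z; rewrite subset0.
have /negbTE-> : A != set0 by apply/set0Pn; exists a.
(* toggling a is a sign-reversing involution on the subsets of A *)
pose toggle (Z : {set T}) := if a \in Z then Z :\ a else a |: Z.
have toggleK : involutive toggle.
  move=> Z; rewrite /toggle; have [aZ|aZ] := boolP (a \in Z); rewrite ?aZ.
    by rewrite setD11 setD1K.
  by rewrite setU11 setU1K.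
have toggle_sub Z : (toggle Z \subset A) && (a \notin toggle Z)
                    = (Z \subset A) && (a \in Z).
  rewrite /toggle; have [aZ|aZ] := boolP (a \in Z); rewrite ?aZ.
    rewrite setD11 !andbT; apply/idP/idP => [ZaA|ZA].
      by rewrite -(setD1K aZ) subUset sub1set aA ZaA.
    exact: subset_trans (subD1set _ _) ZA.
  by rewrite setU11 !andbF.
rewrite (bigID (fun Z : {set T} => a \in Z)) /=.
rewrite [X in _ + X](reindex_inj (inv_inj toggleK)) /= (eq_bigl _ _ toggle_sub).
rewrite -big_split /= big1 // => Z /andP[_ aZ].
by rewrite /toggle aZ (cardsD1 a Z) aZ exprS mulN1r addNr.
Qed.

Lemma compl_of_partition (T : finType) (X Y : {set T}) :
  [disjoint X & Y] -> X :|: Y = [set: T] -> Y = ~: X.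
Proof.
move=> dXY XUY; apply/setP => y; rewrite inE.
have : y \in X :|: Y by rewrite XUY inE.
rewrite inE => /orP[yX | yY]; first by rewrite yX (disjointFr dXY yX).
by rewrite yY (disjointFl dXY yY).
Qed.

Lemma perm_imset_eq (T : finType) (s : {perm T}) (X : {set T}) :
  (s @: X == X) = (X :&: s @^-1: (~: X) == set0).
Proof.
rewrite setI_eq0 disjoints_subset preimsetC setCK -sub_imset_pre.
by rewrite eqEcard card_imset ?leqnn ?andbT //; apply: perm_inj.
Qed.

Theorem proposition2p37 (C : comPzRingType) (T : finType) (X Y : {set T}) (n : nat)
  (hdisj : [disjoint X & Y]) (hcov : X :|: Y = [set: T])
  (hX : #|X| = n) (hY : #|Y| = n) :
  \sum_(Z : {set T} | Z \subset X) (-1) ^+ #|Z| *: Pgr C Y Z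
  = \sum_(s : {perm T} | s @: X == X) (-1) ^+ odd_perm s *: gr_basis C s.
Proof.
rewrite /Pgr; under eq_bigr => Z _ do rewrite scaler_sumr.
rewrite (exchange_big_dep xpredT) //= [RHS]big_mkcond /=.
apply: eq_bigr => s _; rewrite -scaler_suml.
have sub_domain (Z : {set T}) :
    (Z \subset X) && (s @: Z \subset Y) = (Z \subset X :&: s @^-1: Y).
  by rewrite subsetI sub_imset_pre.
rewrite (eq_bigl _ _ sub_domain) sum_subset_sign (compl_of_partition hdisj hcov).
by rewrite -perm_imset_eq; case: eqP; rewrite ?scale1r ?scale0r.
Qed.
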